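(* Let $s_1,s_2\ge0$ be integers and let $B^{s_1,s_2}(r_1,r_2;p_1,p_2)$ be as defined in the context. For all integers $r_1\ge1$, $r_2\ge0$, $p_2\ge0$ and $0\le p_1\le r_1-1$ with $(r_1-1)-p_1\ge p_2-r_2$, $$B^{s_1,s_2}(r_1,r_2;p_1,p_2)=B^{s_1,s_2}(r_1-1,r_2;p_1-1,p_2)+B^{s_1,s_2}(r_1-1,r_2+1;p_1,p_2)+(2p_1+2s_1)\,B^{s_1,s_2}(r_1-1,r_2;p_1,p_2).$$ In particular, when $p_2=0$, $$B^{s_1,s_2}(r_1,r_2;p_1,0)=B^{s_1,s_2}(r_1-1,r_2;p_1-1,0)+(2p_1+2s_1+s_2)\,B^{s_1,s_2}(r_1-1,r_2;p_1,0),$$ and this holds in particular when $r_2=0$.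
   Context: $S(n,m)$ denotes the Stirling number of the second kind, with the conventions $S(0,0)=1$, $S(n,0)=0$ for $n\ge1$, and $S(n,m)=0$ whenever $m>n$ or $m<0$; also $0^0=1$ and $\binom{n}{i}=0$ unless $0\le i\le n$. For nonnegative integers $s_1,s_2,r_1,r_2$ and integers $p_1,p_2$ define $$B^{s_1,s_2}(r_1,r_2;p_1,p_2)=\sum_{i=0}^{r_1}\binom{r_1}{i}2^{\,i-p_1}S(i,p_1)\sum_{j=0}^{r_1-i}\binom{r_1-i}{j}(2s_1+s_2)^{r_1-i-j}\sum_{l=0}^{r_2}\binom{r_2}{l}s_2^{\,r_2-l}S(l+j,p_2)$$ (terms with $i<p_1$ vanish since $S(i,p_1)=0$). In the paper this number is written $B^{s_1,s_2}_{2r_1+r_2,\,2p_1+p_2}$. *)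

From mathcomp Require Import all_boot all_order all_algebra.
Set Implicit Arguments. Unset Strict Implicit. Unset Printing Implicit Defensive.

Fixpoint stirling2 (n m : nat) : nat :=
  match n, m with
  | 0, 0 => 1
  | 0, _.+1 => 0
  | _.+1, 0 => 0
  | n'.+1, m'.+1 => m'.+1 * stirling2 n' m'.+1 + stirling2 n' m'
  end.

Definition stirlingZ (n : nat) (m : int) : nat :=
  match m with
  | Posz k => stirling2 n k
  | Negz _ => 0
  end.

(* B^{s1,s2}(r1,r2;p1,p2).  The factor 2^{i-p1} is only relevant when
   S(i,p1) <> 0, i.e. 0 <= p1 <= i, where i - |p1| is the exact difference. *)
Definition Bss (s1 s2 r1 r2 : nat) (p1 p2 : int) : nat :=
  \sum_(i < r1.+1) 'C(r1, i) * 2 ^ (i - `|p1|) * stirlingZ i p1 *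
    \sum_(j < (r1 - i).+1) 'C(r1 - i, j) * (2 * s1 + s2) ^ (r1 - i - j) *
      \sum_(l < r2.+1) 'C(r2, l) * s2 ^ (r2 - l) * stirlingZ (l + j) p2.

From mathcomp Require Import all_boot all_order all_algebra.
From mathcomp Require Import ring.

(* With E the shift f(j) |-> f(j+1), the inner sum of Bss is
   ((E + s2)^r2 S(-,p2))(j), and the middle sum applies (E + 2 s1 + s2)^m to it
   in j and evaluates at j = 0.  Pascal's rule (E + a)^(n+1) = (E + a)^n E + a (E + a)^n
   gives a recursion for each of these layers, while the weight 2^(i-p1) S(i,p1)
   obeys the Stirling recurrence; combining them through Pascal's rule for
   'C(r1, i) yields the identity, with no constraint linking p2 and r2. *)

Lemma stirling2_small n m : n < m -> stirling2 n m = 0.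
Proof.
elim: n m => [|n IHn] [|m] //=; rewrite ltnS => lt_nm.
by rewrite IHn ?(leqW lt_nm) // IHn // muln0.
Qed.

Lemma sum_binS n (F : nat -> nat -> nat) :
  \sum_(i < n.+2) 'C(n.+1, i) * F i (n.+1 - i) =
  \sum_(i < n.+1) 'C(n, i) * (F i (n.+1 - i) + F i.+1 (n - i)).
Proof.
rewrite big_ord_recl.
under eq_bigr => i _ do rewrite lift0 binS subSS mulnDl.
rewrite /= bin0 subn0 mul1n big_split /=.
under [X in _ = X]eq_bigr => i _ do rewrite mulnDr.
rewrite [in RHS]big_split /= [X in _ = X + _]big_ord_recl.
under [X in _ = _ + X + _]eq_bigr => i _ do rewrite lift0 subSS.
rewrite /= bin0 subn0 mul1n.
rewrite [X in _ + (X + _) = _]big_ord_recr /= bin_small // mul0n addn0.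
by rewrite addnA.
Qed.

Section BssRecursion.
Variables s1 s2 : nat.
Variable p2 : int.

Definition inner_sum j r :=
  \sum_(l < r.+1) 'C(r, l) * s2 ^ (r - l) * stirlingZ (l + j) p2.
Definition middle_sum m r :=
  \sum_(j < m.+1) 'C(m, j) * (2 * s1 + s2) ^ (m - j) * inner_sum j r.
Definition outer_coef i (p : int) := 2 ^ (i - `|p|) * stirlingZ i p.

Lemma BssE r1 r2 p1 : Bss s1 s2 r1 r2 p1 p2 =
  \sum_(i < r1.+1) 'C(r1, i) * outer_coef i p1 * middle_sum (r1 - i) r2.
Proof. by apply: eq_bigr => i _; rewrite /outer_coef mulnA. Qed.

Lemma inner_sumS j r : inner_sum j r.+1 = inner_sum j.+1 r + s2 * inner_sum j r.
Proof.
rewrite /inner_sum.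
under eq_bigr => l _ do rewrite -mulnA.
rewrite (sum_binS r (fun l k => s2 ^ k * stirlingZ (l + j) p2)).
rewrite big_distrr -big_split /=; apply: eq_bigr => l _.
have le_lr : l <= r by rewrite -ltnS.
rewrite subSn // expnS addSn addnS; ring.
Qed.

Lemma middle_sumS m r :
  middle_sum m.+1 r = middle_sum m r.+1 + 2 * s1 * middle_sum m r.
Proof.
rewrite /middle_sum.
under eq_bigr => j _ do rewrite -mulnA.
rewrite (sum_binS m (fun j k => (2 * s1 + s2) ^ k * inner_sum j r)).
rewrite big_distrr -big_split /=; apply: eq_bigr => j _.
have le_jm : j <= m by rewrite -ltnS.
rewrite subSn // expnS inner_sumS; ring.
Qed.

Lemma outer_coefS i (p : nat) :
  outer_coef i.+1 p = 2 * p * outer_coef i p + outer_coef i (p%:Z - 1)%R.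
Proof.
rewrite /outer_coef; case: p => [|q]; first by rewrite /= !muln0.
have -> : (q.+1%:Z - 1)%R = q by rewrite -addn1 PoszD GRing.addrK.
rewrite /= subSS.
have [lt_iq | le_qi] := ltnP i q.+1.
  by rewrite (stirling2_small _ _ lt_iq) !muln0.
rewrite -(subnSK le_qi) expnS; ring.
Qed.

Lemma BssS r r2 (p : nat) : Bss s1 s2 r.+1 r2 p p2 =
  Bss s1 s2 r r2 (p%:Z - 1)%R p2 + Bss s1 s2 r r2.+1 p p2
  + (2 * p + 2 * s1) * Bss s1 s2 r r2 p p2.
Proof.
rewrite !BssE.
under eq_bigr => i _ do rewrite -mulnA.
rewrite (sum_binS r (fun i k => outer_coef i p * middle_sum k r2)).
rewrite big_distrr -!big_split /=; apply: eq_bigr => i _.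
have le_ir : i <= r by rewrite -ltnS.
rewrite subSn // middle_sumS outer_coefS; ring.
Qed.

End BssRecursion.

Lemma inner_sum_p0S s2 j r : inner_sum s2 0 j r.+1 = s2 * inner_sum s2 0 j r.
Proof.
rewrite inner_sumS; suff -> : inner_sum s2 0 j.+1 r = 0 by [].
by rewrite /inner_sum big1 // => l _; rewrite addnS /= muln0.
Qed.

Lemma Bss_p0_r2S s1 s2 r r2 p :
  Bss s1 s2 r r2.+1 p 0 = s2 * Bss s1 s2 r r2 p 0.
Proof.
have middle_sum_p0S m : middle_sum s1 s2 0 m r2.+1 = s2 * middle_sum s1 s2 0 m r2.
  by rewrite /middle_sum big_distrr; apply: eq_bigr => j _; rewrite inner_sum_p0S mulnCA.
by rewrite !BssE big_distrr; apply: eq_bigr => i _; rewrite middle_sum_p0S mulnCA.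
Qed.

Theorem lemma3p17 (s1 s2 : nat) :
  (forall (r1 r2 p1 p2 : nat),
     1 <= r1 -> p1 <= r1 - 1 ->
     (p2%:Z - r2%:Z <= (r1%:Z - 1) - p1%:Z)%R ->
     Bss s1 s2 r1 r2 p1 p2 =
       Bss s1 s2 (r1 - 1) r2 (p1%:Z - 1)%R p2
       + Bss s1 s2 (r1 - 1) r2.+1 p1 p2
       + (2 * p1 + 2 * s1) * Bss s1 s2 (r1 - 1) r2 p1 p2)
  /\
  (forall (r1 r2 p1 : nat),
     1 <= r1 -> p1 <= r1 - 1 ->
     Bss s1 s2 r1 r2 p1 0 =
       Bss s1 s2 (r1 - 1) r2 (p1%:Z - 1)%R 0
       + (2 * p1 + 2 * s1 + s2) * Bss s1 s2 (r1 - 1) r2 p1 0).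
Proof.
split.
  by move=> [|r] r2 p1 p2 // _ _ _; rewrite subn1 BssS.
move=> [|r] r2 p1 // _ _; rewrite subn1 /= BssS Bss_p0_r2S; ring.
Qed.
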